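(* Let $V(\tilde\Lambda)$ be a finite-dimensional irreducible $gl(m|n+1)$-module with highest weight $\tilde\Lambda=\sum_{i=1}^m\tilde\Lambda_i\varepsilon_i+\sum_{\mu=1}^{n+1}\tilde\Lambda_\mu\delta_\mu$. Let $v_+\in V(\tilde\Lambda)$ be a (nonzero) $L$-maximal weight vector whose weight, restricted to the Cartan subalgebra of $gl(m|n)$, is $\Lambda=\sum_{i=1}^m\Lambda_i\varepsilon_i+\sum_{\mu=1}^n\Lambda_\mu\delta_\mu$. Then: (i) the components of $\Lambda$ satisfy the betweenness conditions $\tilde\Lambda_\mu\ge\Lambda_\mu\ge\tilde\Lambda_{\mu+1}$ for $1\le\mu\le n$, and $\tilde\Lambda_i\ge\Lambda_i\ge\tilde\Lambda_i-1$ for $1\le i\le m$; (ii) $v_+$ is the unique (up to scalar multiples) $L$-maximal weight vector in $V(\tilde\Lambda)$ of weight $\Lambda$.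
   Context: Work over $\mathbb{C}$. $gl(m|n+1)$ has homogeneous basis $E_{pq}$, $1\le p,q\le m+n+1$, with parity $(p)+(q)$ where $(p)=0$ for $p\le m$ and $(p)=1$ for $p>m$, and graded bracket $[E_{pq},E_{rs}]=\delta_{qr}E_{ps}-(-1)^{((p)+(q))((r)+(s))}\delta_{ps}E_{rq}$. Weights are written in the basis $\varepsilon_i$ ($1\le i\le m$), $\delta_\mu$: the coefficient of $\varepsilon_i$ is the eigenvalue of $E_{ii}$ and the coefficient of $\delta_\mu$ is the eigenvalue of $E_{m+\mu,m+\mu}$. $gl(m|n)$ is the subalgebra spanned by $E_{pq}$ with $p,q\le m+n$, and $L=gl(m|n)\oplus gl(1)$ where $gl(1)$ is spanned by $E_{m+n+1,m+n+1}$. An $L$-maximal weight vector is a weight vector annihilated by all $E_{pq}$ with $p<q\le m+n$. (All weight components of $V(\tilde\Lambda)$ differ from those of $\tilde\Lambda$ by integers, so the inequalities compare numbers differing by integers.) *)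

From mathcomp Require Import all_boot all_algebra complex.
From mathcomp Require Import Rstruct.
Set Implicit Arguments. Unset Strict Implicit. Unset Printing Implicit Defensive.
Import GRing.Theory Num.Theory.
Local Open Scope ring_scope.

Definition C : numClosedFieldType := complex Rdefinitions.R.

(* Indices: 0-based ordinals p : 'I_N stand for the 1-based index p+1.
   Parity (p) = 0 iff p+1 <= m, i.e. (p) = 1 iff m <= p (0-based). *)
Definition par (m N : nat) (p : 'I_N) : bool := (m <= p)%N.

Definition sgn (m N : nat) (p q r s : 'I_N) : C :=
  (-1) ^+ nat_of_bool ((par m p (+) par m q) && (par m r (+) par m s)).

(* A gl(m|N-m)-supermodule structure on C^d (column vectors):
   rho p q is the matrix of E_pq, J is the parity operator of the
   Z/2-grading (J^2 = 1, E_pq has parity (p)+(q)), and the graded bracket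
   [E_pq,E_rs] = d_qr E_ps - (-1)^{..} d_ps E_rq is represented. *)
Definition super_glrep (m N d : nat) (rho : 'I_N -> 'I_N -> 'M[C]_d)
    (J : 'M[C]_d) : Prop :=
  [/\ J *m J = 1%:M,
      (forall p q, J *m rho p q =
         ((-1) ^+ nat_of_bool (par m p (+) par m q)) *: (rho p q *m J)) &
      (forall p q r s,
         rho p q *m rho r s - sgn m p q r s *: (rho r s *m rho p q)
         = (q == r)%:R *: rho p s - (sgn m p q r s * (p == s)%:R) *: rho r q)].

(* Irreducibility (as a supermodule): C^d is nonzero and every graded
   submodule (a subspace stable under all E_pq and under J) is 0 or everything.
   Subspaces of column vectors are encoded as row spaces of matrices U,
   the subspace being {u^T | u in rowspace U}. *)
Definition irreducible_super (N d : nat) (rho : 'I_N -> 'I_N -> 'M[C]_d)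
    (J : 'M[C]_d) : Prop :=
  (0 < d)%N /\
  forall U : 'M[C]_d,
    (forall p q, (U *m (rho p q)^T <= U)%MS) -> (U *m J^T <= U)%MS ->
    U = 0 \/ row_full U.

Definition weight_vector (N d : nat) (rho : 'I_N -> 'I_N -> 'M[C]_d)
    (v : 'cV[C]_d) (w : 'I_N -> C) : Prop :=
  v != 0 /\ forall p, rho p p *m v = w p *: v.

Definition has_highest_weight (N d : nat) (rho : 'I_N -> 'I_N -> 'M[C]_d)
    (lam : 'I_N -> C) : Prop :=
  exists v : 'cV[C]_d, weight_vector rho v lam /\
    forall p q : 'I_N, (p < q)%N -> rho p q *m v = 0.

(* L-maximal: annihilated by all E_pq with p < q <= m+n (1-based),
   i.e. p < q < m+n (0-based). *)
Definition L_maximal (k N d : nat) (rho : 'I_N -> 'I_N -> 'M[C]_d)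
    (v : 'cV[C]_d) : Prop :=
  forall p q : 'I_N, (p < q)%N -> (q < k)%N -> rho p q *m v = 0.

From mathcomp Require Import all_boot all_algebra complex.
From mathcomp Require Import Rstruct.
From mathcomp Require Import zify ring.
Set Implicit Arguments. Unset Strict Implicit. Unset Printing Implicit Defensive.
Import GRing.Theory Num.Theory.
Local Open Scope ring_scope.

(* Apply to v_+ the operators E_{a,m+n+1}, a = 1, ..., m+n in turn, each to the
   highest power that does not kill the vector.  Every step keeps the vector
   L-maximal, so the result is annihilated by all raising operators and, the
   module being irreducible, is a nonzero multiple of the highest weight vector.
   Comparing weights, the exponents are k_a = Lt_a - Lam_a, natural numbers, and
   k_a <= 1 for the odd generators (a <= m), which square to zero: these are the
   upper bounds.  The composite operator depends only on the weight of v_+, is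
   linear, and sends every nonzero L-maximal vector of that weight to a nonzero
   multiple of the highest weight vector: this is the uniqueness.  For the lower
   bounds, first lower v_+ by the E_{m+n+1,b} as far as possible, which only
   decreases its weight; for the new vector the sl(2)-strings of the even pairs
   (b, m+n+1), b > m, show that the top weight just before the b-th step is
   Lt_b, so that k_b = Lt_b - Lt_{b+1} and the new weight at b is Lt_{b+1}.
   That primitive vectors are multiples of the highest weight vector is shown
   with the grading operator sum_r r E_rr: lowering operators raise its
   eigenvalue, and they span the module from a homogeneous highest weight
   vector. *)

Section LinearAlgebra.
Variables (F : numFieldType) (d : nat).
Implicit Types (A G : 'M[F]_d) (y z : 'cV[F]_d).

(* Successive images are eigenvectors of [G] with the pairwise distinct
   eigenvalues [lam + j * del], of which there are at most [d]. *)
Lemma eigen_string_end G A (del lam : F) y :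
  del != 0 -> (forall z, G *m (A *m z) = A *m (G *m z) + del *: (A *m z)) ->
  G *m y = lam *: y -> y != 0 ->
  exists k, iter k (mulmx A) y != 0 /\ iter k.+1 (mulmx A) y = 0.
Proof.
move=> del_neq0 GA Gy y_neq0.
have Giter j : G *m iter j (mulmx A) y = (lam + j%:R * del) *: iter j (mulmx A) y.
  elim: j => [|j IHj] /=; first by rewrite mul0r addr0.
  by rewrite GA IHj -scalemxAr -scalerDl mulrSr mulrDl mul1r addrA.
have /existsP [j /eqP Aj0] : [exists j : 'I_d.+1, iter j (mulmx A) y == 0].
  apply: contraT; rewrite negb_exists => /forallP iter_neq0.
  pose roots := [seq lam + j%:R * del | j <- iota 0 d.+1].
  have : (size roots < size (char_poly G^T))%N.
    apply: max_poly_roots; first exact: monic_neq0 (char_poly_monic _).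
    - apply/allP => x /mapP [j]; rewrite mem_iota add0n => /andP [_ ltjd] ->.
      rewrite -eigenvalue_root_char; apply/eigenvalueP.
      exists (iter j (mulmx A) y)^T; last by rewrite trmx_eq0 (iter_neq0 (Ordinal ltjd)).
      by rewrite -trmx_mul Giter linearZ.
    - rewrite map_inj_uniq ?iota_uniq // => i j /addrI /(mulIf del_neq0).
      by move/eqP; rewrite eqr_nat => /eqP.
  by rewrite size_map size_iota size_char_poly ltnn.
have ex_zero : exists j, iter j (mulmx A) y == 0 by exists j; rewrite Aj0.
case: (ex_minnP ex_zero) => -[|k] /eqP Ak0 Amin.
  by rewrite -Ak0 eqxx in y_neq0.
exists k; split => //; apply/negP => /(Amin k); by rewrite ltnn.
Qed.

Lemma iter_annihilated A B (c : F) (f : 'cV[F]_d -> 'cV[F]_d) y k :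
  (forall z, A *m (B *m z) = c *: (B *m (A *m z)) + f z) -> A *m y = 0 ->
  (forall j, f (iter j (mulmx B) y) = 0) -> A *m iter k (mulmx B) y = 0.
Proof.
by move=> AB Ay0 f0; elim: k => //= k IHk; rewrite AB IHk mulmx0 scaler0 add0r.
Qed.

Lemma iter_supercomm_annihilated A B (c : F) y k :
  (forall z, A *m (B *m z) = c *: (B *m (A *m z))) -> A *m y = 0 ->
  A *m iter k (mulmx B) y = 0.
Proof.
move=> AB Ay0; apply: (iter_annihilated (f := fun=> 0)) => // z.
by rewrite AB addr0.
Qed.

Lemma iter_mulmx_linear A k (a b : F) (u v : 'cV[F]_d) :
  iter k (mulmx A) (a *: u + b *: v) =
  a *: iter k (mulmx A) u + b *: iter k (mulmx A) v.
Proof. by elim: k => //= k ->; rewrite mulmxDr -!scalemxAr. Qed.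

Lemma iter_stationary (f : 'M[F]_d -> 'M[F]_d) (U : 'M[F]_d) :
  (forall V, (V <= f V)%MS) -> exists k, (f (iter k f U) <= iter k f U)%MS.
Proof.
move=> f_incr.
have /existsP [k fk] : [exists k : 'I_d.+1, f (iter k f U) <= iter k f U]%MS.
  apply: contraT; rewrite negb_exists => /forallP f_grows.
  suff rank_grows k : (k <= d.+1)%N -> (k <= \rank (iter k f U))%N.
    by have := rank_grows d.+1 (leqnn _); rewrite leqNgt ltnS rank_leq_col.
  elim: k => // k IHk ltkd.
  apply: leq_ltn_trans (IHk (ltnW ltkd)) (rank_ltmx _).
  by rewrite ltmxE f_incr (f_grows (Ordinal ltkd)).
by exists k.
Qed.

Definition eigsum G (s : F) (M : nat) : 'M[F]_d :=
  (\sum_(j < M) eigenspace G (s + j%:R))%MS.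

Lemma eigenspace_sub_eigsum G s M j :
  (j < M)%N -> (eigenspace G (s + j%:R) <= eigsum G s M)%MS.
Proof. by move=> ltjM; apply: (sumsmx_sup (Ordinal ltjM)). Qed.

Lemma eigsumS G s M M' : (M <= M')%N -> (eigsum G s M <= eigsum G s M')%MS.
Proof.
move=> leMM'; apply/sumsmx_subP => j _.
exact/eigenspace_sub_eigsum/(leq_trans (ltn_ord j)).
Qed.

Lemma eigsum_recl G s M :
  (eigenspace G s + eigsum G (s + 1) M <= eigsum G s M.+1)%MS.
Proof.
rewrite /eigsum big_ord_recl /= addr0; apply: addsmxS => //.
by apply/sumsmx_subP => j _; rewrite -addrA -mulrS; apply: (sumsmx_sup j).
Qed.

Lemma eigsumG G s M : (eigsum G s M *m G <= eigsum G s M)%MS.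
Proof.
rewrite sumsmxMr; apply/sumsmx_subP => j _; apply: (sumsmx_sup j) => //.
by have /eigenspaceP -> := submx_refl (eigenspace G (s + j%:R)); apply: scalemx_sub.
Qed.

Lemma eigsum_eigenspace_eq0 G s M lam (w : 'rV[F]_d) :
  (forall j, (j < M)%N -> lam != s + j%:R) ->
  (w <= eigenspace G lam)%MS -> (w <= eigsum G s M)%MS -> w = 0.
Proof.
elim: M w => [|M IHM] w lam_out w_lam; first by rewrite /eigsum big_ord0 submx0 => /eqP.
rewrite /eigsum big_ord_recr /= => /sub_addsmxP [[u1 u2]] /= w_def.
set mu := s + M%:R; have /eigenspaceP Gw := w_lam.
have /eigenspaceP Gmu := submx_refl (eigenspace G mu).
have shifted : (lam - mu) *: w = u1 *m eigsum G s M *m (G - mu%:M).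
  rewrite scalerBl -Gw -mul_mx_scalar -mulmxBr {1}w_def mulmxDl.
  rewrite -(mulmxA u2) -/mu (mulmxBr (eigenspace G mu)) Gmu mul_mx_scalar.
  by rewrite subrr mulmx0 addr0.
have: (lam - mu) *: w = 0.
  apply: IHM => [j ltjM||]; [exact/lam_out/ltnW | by rewrite scalemx_sub |].
  rewrite shifted -mulmxA mulmx_sub // mulmxBr mul_mx_scalar.
  by rewrite addmx_sub ?eigsumG // eqmx_opp scalemx_sub.
move/eqP; rewrite scaler_eq0 subr_eq0 (negPf (lam_out M _)) //=.
by move/eqP.
Qed.

End LinearAlgebra.

Section HighestWeight.
Variables (m N d : nat) (rho : 'I_N -> 'I_N -> 'M[C]_d) (J : 'M[C]_d).
Hypothesis rep : super_glrep m rho J.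
Local Notation E := rho.
Implicit Types (p q r s : 'I_N) (x z h : 'cV[C]_d) (nu : 'I_N -> C).

Lemma sgn_even (p q r s : 'I_N) : par m p = par m q -> sgn m p q r s = 1.
Proof. by move=> pq; rewrite /sgn pq addbb. Qed.

Lemma E_bracket p q r s : E p q *m E r s =
  sgn m p q r s *: (E r s *m E p q) + (q == r)%:R *: E p s
  - (sgn m p q r s * (p == s)%:R) *: E r q.
Proof.
case: rep => _ _ bracket; move/eqP: (bracket p q r s).
by rewrite subr_eq => /eqP ->; rewrite addrC addrA.
Qed.

Lemma E_bracketv p q r s x : E p q *m (E r s *m x) =
  sgn m p q r s *: (E r s *m (E p q *m x)) + (q == r)%:R *: (E p s *m x)
  - (sgn m p q r s * (p == s)%:R) *: (E r q *m x).
Proof. by rewrite mulmxA E_bracket !mulmxDl mulNmx -!scalemxAl -!mulmxA. Qed.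

Lemma E_J p q x : E p q *m (J *m x) =
  (-1) ^+ (par m p (+) par m q) *: (J *m (E p q *m x)).
Proof.
case: rep => _ JE _; set c := (-1) ^+ _.
have cc : c * c = 1 by rewrite -expr2 -exprM mulnC exprM sqrrN !expr1n.
rewrite -[LHS]scale1r -cc -scalerA; congr (_ *: _).
by rewrite [RHS]mulmxA JE -scalemxAl -mulmxA.
Qed.

Lemma E_supercomm p q r s x : q != r -> p != s ->
  E p q *m (E r s *m x) = sgn m p q r s *: (E r s *m (E p q *m x)).
Proof. by move=> /negPf qr /negPf ps; rewrite E_bracketv qr ps mulr0 !scale0r addr0 subr0. Qed.

Lemma E_comm_l p q r s x : p != s -> E p q *m (E r s *m x) =
  sgn m p q r s *: (E r s *m (E p q *m x)) + (q == r)%:R *: (E p s *m x).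
Proof. by move=> /negPf ps; rewrite E_bracketv ps mulr0 scale0r subr0. Qed.

Lemma E_comm_r p q r s x : q != r -> E p q *m (E r s *m x) =
  sgn m p q r s *: (E r s *m (E p q *m x)) - (sgn m p q r s * (p == s)%:R) *: (E r q *m x).
Proof. by move=> /negPf qr; rewrite E_bracketv qr scale0r addr0. Qed.

Lemma E_diag_comm p q r x : q != r -> E p p *m (E q r *m x) =
  E q r *m (E p p *m x) + ((p == q)%:R - (p == r)%:R) *: (E q r *m x).
Proof.
move=> neq_qr; rewrite E_bracketv sgn_even // scale1r mul1r scalerBl addrA.
by have [<-|_] := eqVneq p q; have [<-|_] := eqVneq p r; rewrite ?scale0r.
Qed.

Lemma E_square0 p q x : par m p != par m q -> E p q *m (E p q *m x) = 0.
Proof.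
move=> par_pq; have neq_pq : p != q by apply: contraNneq par_pq => ->.
have odd_pq : par m p (+) par m q by move: par_pq; case: (par m p); case: (par m q).
have neq_qp : q != p by rewrite eq_sym.
move/eqP: (E_supercomm x neq_qp neq_pq); rewrite /sgn andbb odd_pq expr1 scaleN1r.
by rewrite -addr_eq0 -mulr2n -scaler_nat scaler_eq0 pnatr_eq0 => /eqP.
Qed.

Definition has_weight x nu := forall p, E p p *m x = nu p *: x.
Definition primitive x := forall p q : 'I_N, (p < q)%N -> E p q *m x = 0.

Lemma has_weight_E x nu p q : has_weight x nu -> p != q ->
  has_weight (E p q *m x) (fun r => nu r + (r == p)%:R - (r == q)%:R).
Proof.
move=> x_nu neq_pq r; rewrite E_diag_comm // x_nu -scalemxAr -scalerDl.
by rewrite addrA.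
Qed.

Lemma has_weight_iter x nu p q k : has_weight x nu -> p != q ->
  has_weight (iter k (mulmx (E p q)) x)
    (fun r => nu r + k%:R * ((r == p)%:R - (r == q)%:R)).
Proof.
move=> x_nu neq_pq; elim: k => [|k IHk] r /=; first by rewrite mul0r addr0 x_nu.
by rewrite (has_weight_E IHk neq_pq r) mulrSr mulrDl mul1r !addrA addrAC.
Qed.

Lemma sl2_string p q x nu j : par m p = par m q -> p != q ->
  E p q *m x = 0 -> has_weight x nu ->
  E p q *m iter j.+1 (mulmx (E q p)) x =
    (j.+1%:R * (nu p - nu q - j%:R)) *: iter j (mulmx (E q p)) x.
Proof.
move=> par_pq neq_pq Ex0 x_nu.
have Ef z : E p q *m (E q p *m z) = E q p *m (E p q *m z) + E p p *m z - E q q *m z.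
  by rewrite E_bracketv sgn_even // !eqxx mul1r !scale1r.
have neq_qp : q != p by rewrite eq_sym.
elim: j => [|j IHj]; first by rewrite /= Ef Ex0 mulmx0 add0r !x_nu -scalerBl mul1r subr0.
rewrite [iter j.+2 _ _]/= Ef IHj -scalemxAr !(has_weight_iter j.+1 x_nu neq_qp).
change (E q p *m iter j (mulmx (E q p)) x) with (iter j.+1 (mulmx (E q p)) x).
rewrite -scalerDl -scalerBl !eqxx (negPf neq_pq) (negPf neq_qp); congr (_ *: _).
by rewrite /= !mulrS; ring.
Qed.

(* Irreducibility only concerns graded submodules, hence the [J]-eigenvector. *)
Lemma primitive_homogeneous x nu : x != 0 -> has_weight x nu -> primitive x ->
  exists h (c : C), [/\ h != 0, has_weight h nu, primitive h & J *m h = c *: h].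
Proof.
move=> x_neq0 x_nu x_prim.
have Jx_nu : has_weight (J *m x) nu.
  by move=> p; rewrite E_J addbb scale1r x_nu -scalemxAr.
have Jx_prim : primitive (J *m x) by move=> p q ltpq; rewrite E_J x_prim // mulmx0 scaler0.
have JJx : J *m (J *m x) = x by case: rep => JJ _ _; rewrite mulmxA JJ mul1mx.
have [xJx0|xJx_neq0] := eqVneq (x + J *m x) 0.
  exists (x - J *m x), (-1); split.
  - have -> : J *m x = - x by apply/eqP; rewrite -addr_eq0 addrC xJx0.
    by rewrite opprK -mulr2n -scaler_nat scaler_eq0 pnatr_eq0 (negPf x_neq0).
  - by move=> p; rewrite mulmxBr x_nu Jx_nu scalerBr.
  - by move=> p q ltpq; rewrite mulmxBr x_prim ?Jx_prim ?subr0.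
  - by rewrite mulmxBr JJx scaleN1r opprB.
exists (x + J *m x), 1; split => //.
- by move=> p; rewrite mulmxDr x_nu Jx_nu scalerDr.
- by move=> p q ltpq; rewrite mulmxDr x_prim ?Jx_prim ?addr0.
- by rewrite mulmxDr JJx scale1r addrC.
Qed.

Definition height_op : 'M[C]_d := \sum_(r : 'I_N) (r : nat)%:R *: E r r.
Definition height nu : C := \sum_(r : 'I_N) (r : nat)%:R * nu r.
(* Subspaces are row spaces, so column vectors enter through their transposes. *)
Local Notation G := height_op^T.

Lemma height_op_weight x nu : has_weight x nu -> height_op *m x = height nu *: x.
Proof.
move=> x_nu; rewrite mulmx_suml scaler_suml; apply: eq_bigr => r _.
by rewrite -scalemxAl x_nu scalerA.
Qed.

Lemma height_op_E p q : p != q ->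
  height_op *m E p q = E p q *m height_op + ((p : nat)%:R - (q : nat)%:R) *: E p q.
Proof.
move=> neq_pq; rewrite mulmx_suml mulmx_sumr.
have delta (i : 'I_N) (c : C) : \sum_(r : 'I_N) (r == i)%:R * c = c.
  by rewrite (bigD1 i) //= eqxx mul1r big1 ?addr0 // => r /negPf ->; rewrite mul0r.
transitivity (\sum_(r : 'I_N) (E p q *m ((r : nat)%:R *: E r r) +
   ((r == p)%:R * (p : nat)%:R - (r == q)%:R * (q : nat)%:R) *: E p q)).
  apply: eq_bigr => r _; rewrite -scalemxAl E_bracket sgn_even // scale1r -scalemxAr.
  have [->|neq_rp] := eqVneq r p.
    rewrite (negPf neq_pq) !(mul1r, mul0r, mulr0, scale0r, subr0, scale1r).
    by rewrite scalerDr.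
  have [->|neq_rq] := eqVneq r q; last by rewrite !(mul0r, mulr0, scale0r, subr0, addr0).
  rewrite !(mul1r, mul0r, mulr0, mulr1, scale0r, subr0, sub0r, scale1r, addr0, add0r).
  by rewrite scalerBr scaleNr.
by rewrite big_split /= -scaler_suml sumrB !delta.
Qed.

Lemma eigenspace_E p q c k (U : 'M[C]_(k, d)) : p != q ->
  (U <= eigenspace G c)%MS ->
  (U *m (E p q)^T <= eigenspace G (c + ((p : nat)%:R - (q : nat)%:R)))%MS.
Proof.
move=> neq_pq /eigenspaceP GU; apply/eigenspaceP.
rewrite -mulmxA -trmx_mul height_op_E // linearD linearZ /= trmx_mul mulmxDr.
by rewrite mulmxA GU -scalemxAl -scalemxAr -scalerDl.
Qed.

Lemma eigenspace_lower c p q : (q < p)%N ->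
  (eigenspace G c *m (E p q)^T <= eigsum G (c + 1) N)%MS.
Proof.
move=> ltqp; have neq_pq : p != q by rewrite neq_ltn ltqp orbT.
apply: submx_trans (eigenspace_E neq_pq (submx_refl _)) _.
rewrite -natrB ?(ltnW ltqp) // -(prednK (_ : 0 < p - q)%N) ?subn_gt0 //.
rewrite mulrS addrA; apply: eigenspace_sub_eigsum.
by have := ltn_ord p; lia.
Qed.

Lemma eigsum_lower c M p q : (q < p)%N ->
  (eigsum G c M *m (E p q)^T <= eigsum G c (M + N))%MS.
Proof.
move=> ltqp; have neq_pq : p != q by rewrite neq_ltn ltqp orbT.
rewrite sumsmxMr; apply/sumsmx_subP => j _.
apply: submx_trans (eigenspace_E neq_pq (submx_refl _)) _.
rewrite -natrB ?(ltnW ltqp) // -addrA -natrD; apply: eigenspace_sub_eigsum.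
by have := ltn_ord p; have := ltn_ord j; lia.
Qed.

Definition lower_step (U : 'M[C]_d) : 'M[C]_d :=
  (U + \sum_(pq : 'I_N * 'I_N | (pq.2 < pq.1)%N) U *m (E pq.1 pq.2)^T)%MS.
Definition lowered h k := iter k lower_step <<h^T>>%MS.

Lemma lower_step_incr U : (U <= lower_step U)%MS.
Proof. exact: addsmxSl. Qed.

Lemma lowered_base h k : (h^T <= lowered h k)%MS.
Proof.
elim: k => [|k IHk]; first by rewrite /= genmxE.
exact: submx_trans IHk (lower_step_incr _).
Qed.

Lemma lowered_lower h k p q : (q < p)%N ->
  (lowered h k *m (E p q)^T <= lowered h k.+1)%MS.
Proof. by move=> ltqp; apply/(submx_trans _ (addsmxSr _ _))/(sumsmx_sup (p, q)). Qed.

Lemma lowered_E h nu k p q : has_weight h nu -> primitive h ->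
  (lowered h k *m (E p q)^T <= lowered h k.+1)%MS.
Proof.
move=> h_nu h_prim; elim: k p q => [|k IHk] p q.
  apply: submx_trans (submxMr _ (_ : <<h^T>> <= h^T)%MS) _; first by rewrite genmxE.
  rewrite -trmx_mul; case: (ltngtP p q) => [ltpq|ltqp|eq_pq].
  - by rewrite h_prim // trmx0 sub0mx.
  - rewrite trmx_mul; apply: submx_trans (lowered_lower h 0 ltqp).
    by rewrite submxMr // genmxE.
  - rewrite (val_inj eq_pq) h_nu linearZ /= scalemx_sub //.
    exact: lowered_base h 1.
rewrite [lowered h k.+1]/= /lower_step addsmxMr addsmx_sub.
rewrite (submx_trans (IHk p q) (lower_step_incr _)) /=.
rewrite sumsmxMr; apply/sumsmx_subP => -[r s] /= ltsr.
rewrite -mulmxA -trmx_mul E_bracket !linearD linearN !linearZ /= trmx_mul.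
rewrite mulmxN scalerN -scaleNr !addmx_sub ?scalemx_sub //.
- by rewrite mulmxA; apply: submx_trans (lowered_lower h k.+1 ltsr); apply: submxMr.
- exact: submx_trans (IHk _ _) (lower_step_incr _).
- exact: submx_trans (IHk _ _) (lower_step_incr _).
Qed.

Lemma lowered_J h c k : J *m h = c *: h -> (lowered h k *m J^T <= lowered h k)%MS.
Proof.
move=> Jh; elim: k => [|k IHk].
  apply: submx_trans (submxMr _ (_ : <<h^T>> <= h^T)%MS) _; first by rewrite genmxE.
  by rewrite -trmx_mul Jh linearZ /= scalemx_sub // genmxE.
rewrite [lowered h k.+1]/= /lower_step addsmxMr addsmx_sub.
rewrite (submx_trans IHk (lower_step_incr _)) /=.
rewrite sumsmxMr; apply/sumsmx_subP => -[r s] /= ltsr.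
case: rep => _ JE _.
rewrite -mulmxA -trmx_mul JE linearZ /= trmx_mul -scalemxAr scalemx_sub //.
by rewrite mulmxA; apply: submx_trans (submxMr _ IHk) (lowered_lower h k ltsr).
Qed.

Lemma lowered_eigsum h nu k : has_weight h nu ->
  (lowered h k <= <<h^T>> + eigsum G (height nu + 1) (k * N))%MS.
Proof.
move=> h_nu; have h_s : (h^T <= eigenspace G (height nu))%MS.
  by apply/eigenspaceP; rewrite -trmx_mul (height_op_weight h_nu) linearZ.
elim: k => [|k IHk] /=; first exact: addsmxSl.
rewrite /lower_step addsmx_sub; apply/andP; split.
  by apply: submx_trans IHk (addsmxS _ (eigsumS _ _ _)); rewrite // leq_mul2r leqnSn orbT.
apply/sumsmx_subP => -[p q] /= ltqp.
apply: submx_trans (submxMr _ IHk) _; rewrite addsmxMr.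
apply: submx_trans (addsmxSr _ _); rewrite addsmx_sub; apply/andP; split.
  apply: submx_trans (eigsumS _ _ (_ : N <= k.+1 * N)%N); last by rewrite leq_pmull.
  by apply: submx_trans (eigenspace_lower _ ltqp); rewrite submxMr // genmxE.
by apply: submx_trans (eigsum_lower _ _ ltqp) (eigsumS _ _ _); rewrite mulSn addnC.
Qed.

Hypothesis irr : irreducible_super rho J.

Section HomogeneousPrimitive.
Variables (h : 'cV[C]_d) (nu : 'I_N -> C) (c : C).
Hypotheses (h_neq0 : h != 0) (h_nu : has_weight h nu) (h_prim : primitive h)
  (Jh : J *m h = c *: h).

Lemma lowered_full : exists K, forall x, (x^T <= lowered h K)%MS.
Proof.
have [K stableK] := iter_stationary <<h^T>>%MS lower_step_incr.
exists K => x; case: irr => _ /(_ (lowered h K)) [p q|||/submx_full //].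
- exact: submx_trans (lowered_E K p q h_nu h_prim) stableK.
- exact: lowered_J Jh.
- move=> lowered0; have := lowered_base h K.
  by rewrite lowered0 submx0 trmx_eq0 (negPf h_neq0).
Qed.

Lemma lowered_span :
  exists M, forall x, (x^T <= <<h^T>> + eigsum G (height nu + 1) M)%MS.
Proof.
have [K fullK] := lowered_full.
by exists (K * N) => x; apply: submx_trans (fullK x) (lowered_eigsum _ h_nu).
Qed.

Lemma height_eigenspace_ge x lam : x != 0 -> height_op *m x = lam *: x ->
  exists j : nat, lam = height nu + j%:R.
Proof.
move=> x_neq0 x_lam; have [M spanM] := lowered_span.
case: (boolP [exists j : 'I_M.+1, lam == height nu + j%:R]).
  by case/existsP => j /eqP lam_j; exists j.
rewrite negb_exists => /forallP lam_out.
suff : x^T = 0 by move/eqP; rewrite trmx_eq0 (negPf x_neq0).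
apply: (eigsum_eigenspace_eq0 (G := G) (M := M.+1) (s := height nu) (lam := lam)).
- by move=> j ltjM; apply: (lam_out (Ordinal ltjM)).
- by apply/eigenspaceP; rewrite -trmx_mul x_lam linearZ.
apply: submx_trans (spanM x) (submx_trans _ (eigsum_recl _ _ _)).
apply: addsmxS => //; rewrite genmxE.
by apply/eigenspaceP; rewrite -trmx_mul (height_op_weight h_nu) linearZ.
Qed.

Lemma height_eigenspace_min x : height_op *m x = height nu *: x ->
  exists a, x = a *: h.
Proof.
move=> x_s; have [M spanM] := lowered_span.
case/sub_addsmxP: (spanM x) => -[u1 y] /= x_def.
have /sub_rVP [a u1_def] : (u1 *m <<h^T>> <= h^T)%MS by rewrite -(genmxE (h^T)) submxMl.
exists a; apply: trmx_inj; rewrite linearZ /= x_def u1_def; apply/eqP.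
rewrite addrC -subr_eq0 addrK; apply/eqP.
apply: (eigsum_eigenspace_eq0 (G := G) (M := M) (s := height nu + 1) (lam := height nu)).
- by move=> j _; rewrite -addrA -subr_eq0 opprD addNKr oppr_eq0 -mulrS pnatr_eq0.
- have -> : y *m eigsum G (height nu + 1) M = x^T - a *: h^T.
    by rewrite x_def u1_def addrAC subrr add0r.
  rewrite addmx_sub ?eqmx_opp ?scalemx_sub //; apply/eigenspaceP.
    by rewrite -trmx_mul x_s linearZ.
  by rewrite -trmx_mul (height_op_weight h_nu) linearZ.
- exact: submxMl.
Qed.
End HomogeneousPrimitive.

Lemma primitive_unique h Lt c x nu : h != 0 -> has_weight h Lt -> primitive h ->
  J *m h = c *: h -> x != 0 -> has_weight x nu -> primitive x ->
  exists2 a, a != 0 & x = a *: h /\ nu =1 Lt.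
Proof.
move=> h_neq0 h_Lt h_prim Jh x_neq0 x_nu x_prim.
have [h' [c' [h'_neq0 h'_nu h'_prim Jh']]] := primitive_homogeneous x_neq0 x_nu x_prim.
have [j1 ge_x] := height_eigenspace_ge h_neq0 h_Lt h_prim Jh x_neq0 (height_op_weight x_nu).
have [j2 ge_h] :=
  height_eigenspace_ge h'_neq0 h'_nu h'_prim Jh' h_neq0 (height_op_weight h_Lt).
have eq_height : height nu = height Lt.
  suff j1_0 : j1 = 0%N by rewrite ge_x j1_0 addr0.
  move/eqP: ge_x; rewrite ge_h -addrA -natrD -subr_eq0 opprD addrA subrr add0r.
  by rewrite oppr_eq0 pnatr_eq0 addn_eq0 => /andP [_ /eqP].
have [a x_def] := height_eigenspace_min h_neq0 h_Lt h_prim Jh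
  (etrans (height_op_weight x_nu) (congr1 (fun t => t *: x) eq_height)).
have a_neq0 : a != 0 by apply: contraNneq x_neq0; rewrite x_def => ->; rewrite scale0r.
exists a => //; split => // p; apply/eqP.
have := x_nu p; rewrite x_def -scalemxAr h_Lt !scalerA mulrC => /eqP.
rewrite -subr_eq0 -scalerBl scaler_eq0 (negPf h_neq0) orbF -mulrBl mulf_eq0.
by rewrite (negPf a_neq0) orbF subr_eq0 eq_sym.
Qed.
End HighestWeight.

Section RaisingChain.
Variables (m n d : nat).
Local Notation T := (m + n)%N.
Local Notation N := T.+1.
Variables (rho : 'I_N -> 'I_N -> 'M[C]_d) (J : 'M[C]_d).
Hypothesis rep : super_glrep m rho J.
Local Notation E := rho.
Local Notation top := (@ord_max T).
Implicit Types (a b p q : 'I_N) (u v x z : 'cV[C]_d) (nu : 'I_N -> C) (ks : nat -> nat).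

Lemma neq_top a : (a < T)%N -> a != top.
Proof. by move=> ltaT; rewrite -val_eqE /= neq_ltn ltaT. Qed.

Lemma top_of_ge a : (T <= a)%N -> a = top.
Proof. by move=> leTa; apply: val_inj; apply/eqP; rewrite eqn_leq leTa -ltnS ltn_ord. Qed.

Definition raise_free r u := forall a : 'I_N, (a < r)%N -> E a top *m u = 0.
Definition lower_free r u := forall b : 'I_N, (r <= b < T)%N -> E top b *m u = 0.

Lemma raise_step a u nu : (a < T)%N -> u != 0 -> has_weight rho u nu ->
  L_maximal T rho u -> raise_free a u ->
  exists k, [/\ iter k (mulmx (E a top)) u != 0,
    L_maximal T rho (iter k (mulmx (E a top)) u),
    raise_free a.+1 (iter k (mulmx (E a top)) u) & (a < m)%N -> (k <= 1)%N].
Proof.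
move=> ltaT u_neq0 u_nu u_Lmax u_free; have neq_atop := neq_top ltaT.
have neq_topa : top != a by rewrite eq_sym.
have shift z : E top top *m (E a top *m z) =
    E a top *m (E top top *m z) + (-1) *: (E a top *m z).
  by rewrite (E_diag_comm rep) // eqxx (negPf neq_topa) sub0r.
have [|k [k_neq0 k_end]] := eigen_string_end _ shift (u_nu top) u_neq0.
  by rewrite oppr_eq0 oner_eq0.
exists k; split => //.
- move=> p q ltpq ltqT; have neq_ptop : p != top by apply/neq_top/(ltn_trans ltpq).
  apply: (iter_annihilated (c := sgn m p q a top)
    (f := fun z => (q == a)%:R *: (E p top *m z))) => [z||j].
  + exact: (E_comm_l rep).
  + exact: u_Lmax.
  have [eq_qa|] := eqVneq q a; last by rewrite scale0r.
  rewrite scale1r (iter_supercomm_annihilated (c := sgn m p top a top)) //.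
    by move=> z; apply: (E_supercomm rep).
  by apply: u_free; rewrite -eq_qa.
- move=> b; rewrite ltnS leq_eqVlt => /orP [/eqP/val_inj ->|ltba]; first exact: k_end.
  apply: (iter_supercomm_annihilated (c := sgn m b top a top)); last exact: u_free.
  by move=> z; apply: (E_supercomm rep) => //; apply/neq_top/(ltn_trans ltba).
move=> ltam; case: k k_neq0 {k_end} => [|[|k]] // /negP[].
by rewrite /= (E_square0 rep) ?mulmx0 // /par /= leq_addr leqNgt ltam.
Qed.

Lemma lower_free_raise r k u : (r < T)%N -> L_maximal T rho u -> lower_free r u ->
  lower_free r.+1 (iter k (mulmx (E (inord r) top)) u).
Proof.
move=> ltrT u_Lmax u_free b /andP [ltrb ltbT].
have val_r : (inord r : 'I_N) = r :> nat by rewrite inordK // ltnS ltnW.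
have neq_br : b != inord r by apply: contraTneq ltrb => ->; rewrite val_r ltnn.
have neq_rtop : inord r != top by apply: neq_top; rewrite val_r.
apply: (iter_annihilated (c := sgn m top b (inord r) top)
  (f := fun z => - (sgn m top b (inord r) top * 1) *: (E (inord r) b *m z))) => [z||j].
- by rewrite (E_comm_r rep) // eqxx scaleNr.
- by apply: u_free; rewrite ltnW.
rewrite (iter_supercomm_annihilated (c := sgn m (inord r) b (inord r) top)) ?scaler0 //.
  by move=> z; apply: (E_supercomm rep).
by apply: u_Lmax; rewrite ?val_r.
Qed.

Definition raise_chain (ks : nat -> nat) r f u :=
  foldl (fun u (b : nat) => iter (ks b) (mulmx (E (inord b) top)) u) u (iota r f).

Lemma raise_chainS ks r f u : raise_chain ks r f.+1 u =
  raise_chain ks r.+1 f (iter (ks r) (mulmx (E (inord r) top)) u).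
Proof. by []. Qed.

Lemma raise_chain_ext ks ks' r f u :
  (forall b : nat, (r <= b < r + f)%N -> ks b = ks' b) ->
  raise_chain ks r f u = raise_chain ks' r f u.
Proof.
elim: f r u => // f IHf r u eq_ks.
rewrite !raise_chainS eq_ks ?leqnn ?addnS ?ltnS ?leq_addr //.
apply: IHf => b /andP [ltrb ltbf].
by apply: eq_ks; rewrite ltnW //= -addSnnS.
Qed.

Lemma raise_chain_linear ks r f (a b : C) u v :
  raise_chain ks r f (a *: u + b *: v) =
  a *: raise_chain ks r f u + b *: raise_chain ks r f v.
Proof. by elim: f r u v => // f IHf r u v; rewrite !raise_chainS iter_mulmx_linear IHf. Qed.

Lemma raise_free_primitive u : L_maximal T rho u -> raise_free T u -> primitive rho u.
Proof.
move=> u_Lmax u_free p q ltpq; have [ltqT|/top_of_ge eq_qtop] := ltnP q T.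
  exact: u_Lmax.
by move: ltpq; rewrite eq_qtop; apply: u_free.
Qed.

Definition raised_weight nu a (k : nat) b :=
  nu b + k%:R * ((b == a)%:R - (b == top)%:R).

Lemma has_weight_raise u nu a k : a != top -> has_weight rho u nu ->
  has_weight rho (iter k (mulmx (E a top)) u) (raised_weight nu a k).
Proof. by move=> neq_atop u_nu; apply: (has_weight_iter rep). Qed.

Lemma raised_weight_at nu a k : a != top -> raised_weight nu a k a = nu a + k%:R.
Proof. by move=> /negPf atop; rewrite /raised_weight eqxx atop subr0 mulr1. Qed.

Lemma raised_weight_top nu a k : a != top -> raised_weight nu a k top = nu top - k%:R.
Proof. by move=> atop; rewrite /raised_weight eqxx eq_sym (negPf atop) sub0r mulrN1. Qed.

Lemma raised_weight_other nu a k b : b != a -> b != top -> raised_weight nu a k b = nu b.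
Proof. by move=> /negPf ba /negPf btop; rewrite /raised_weight ba btop subr0 mulr0 addr0. Qed.

Lemma lower_free_exists r u nu : (r <= T)%N -> u != 0 -> has_weight rho u nu ->
  L_maximal T rho u -> lower_free r u ->
  exists s nus, [/\ s != 0, has_weight rho s nus, L_maximal T rho s, lower_free 0 s &
    forall a : 'I_N, (a < T)%N -> exists j : nat, nu a = nus a + j%:R].
Proof.
elim: r u nu => [|r IHr] u nu ltrT u_neq0 u_nu u_Lmax u_lfree.
  by exists u, nu; split => // a _; exists 0%N; rewrite addr0.
set br : 'I_N := inord r.
have val_br : (br : nat) = r by rewrite inordK // ltnS ltnW.
have neq_topbr : top != br by rewrite eq_sym; apply: neq_top; rewrite val_br.
have shift z : E top top *m (E top br *m z) =
    E top br *m (E top top *m z) + 1 *: (E top br *m z).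
  by rewrite (E_diag_comm rep) // eqxx (negPf neq_topbr) subr0.
have [k [k_neq0 k_end]] := eigen_string_end (oner_neq0 C) shift (u_nu top) u_neq0.
have u'_Lmax : L_maximal T rho (iter k (mulmx (E top br)) u).
  move=> p q ltpq ltqT; have neq_qtop : q != top by apply: neq_top.
  apply: (iter_annihilated (c := sgn m p q top br)
    (f := fun z => - (sgn m p q top br * (p == br)%:R) *: (E top q *m z))) => [z||j].
  - by rewrite (E_comm_r rep) // scaleNr.
  - exact: u_Lmax.
  have [eq_pbr|] := eqVneq p br; last by rewrite mulr0 oppr0 scale0r.
  rewrite (iter_supercomm_annihilated (c := sgn m top q top br)) ?scaler0 //.
    by move=> z; apply: (E_supercomm rep).
  by apply: u_lfree; rewrite ltqT andbT -val_br -eq_pbr.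
have u'_lfree : lower_free r (iter k (mulmx (E top br)) u).
  move=> b /andP [lerb ltbT]; have [eq_br|neq_br] := eqVneq (b : nat) r.
    by have -> : b = br by apply: val_inj; rewrite /= val_br.
  apply: (iter_supercomm_annihilated (c := sgn m top b top br)).
    by move=> z; apply: (E_supercomm rep) => //; apply: neq_top.
  by apply: u_lfree; rewrite ltbT andbT ltn_neqAle eq_sym neq_br.
have [s [nus [s_neq0 s_nus s_Lmax s_lfree nu'_nus]]] :=
  IHr _ _ (ltnW ltrT) k_neq0 (has_weight_iter rep k u_nu neq_topbr) u'_Lmax u'_lfree.
exists s, nus; split => // a ltaT; have [j] := nu'_nus a ltaT.
rewrite (negPf (neq_top ltaT)) sub0r.
have [_|_] := eqVneq a br => nu'_a; last by exists j; rewrite -nu'_a oppr0 mulr0 addr0.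
by exists (j + k)%N; rewrite natrD addrA -nu'_a mulrN1 subrK.
Qed.

Section ToHighestWeight.
Hypothesis irr : irreducible_super rho J.
Variables (h0 : 'cV[C]_d) (Lt : 'I_N -> C) (c0 : C).
Hypotheses (h0_neq0 : h0 != 0) (h0_Lt : has_weight rho h0 Lt)
  (h0_prim : primitive rho h0) (Jh0 : J *m h0 = c0 *: h0).

Lemma raise_chain_hw f : forall r u nu, (f + r)%N = T -> u != 0 ->
  has_weight rho u nu -> L_maximal T rho u -> raise_free r u ->
  exists ks, [/\ exists2 c, c != 0 & raise_chain ks r f u = c *: h0,
    forall a : 'I_N, (a < r)%N -> nu a = Lt a,
    forall a : 'I_N, (r <= a < T)%N ->
      (ks a)%:R = Lt a - nu a /\ ((a < m)%N -> (ks a <= 1)%N) &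
    nu top = Lt top + (\sum_(r <= b < T) ks b)%:R].
Proof.
elim: f => [|f IHf] r u nu eq_T u_neq0 u_nu u_Lmax u_free.
  rewrite add0n in eq_T; subst r.
  have [a a_neq0 [u_def nu_Lt]] := primitive_unique rep irr h0_neq0 h0_Lt h0_prim Jh0
    u_neq0 u_nu (raise_free_primitive u_Lmax u_free).
  exists (fun=> 0%N); split => // [|b /andP [leTb ltbT]|]; first by exists a.
    by exfalso; lia.
  by rewrite big_geq // addr0.
have ltrT : (r < T)%N by lia.
set ar : 'I_N := inord r.
have val_ar : (ar : nat) = r by rewrite inordK // ltnS ltnW.
have neq_artop : ar != top by apply: neq_top; rewrite val_ar.
have ltarT : (ar < T)%N by rewrite val_ar.
have u_free_ar : raise_free ar u by move=> a; rewrite val_ar; apply: u_free.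
have [k [u'_neq0 u'_Lmax u'_free k_le1]] := raise_step ltarT u_neq0 u_nu u_Lmax u_free_ar.
rewrite val_ar in u'_free k_le1.
have [|ks' [[c c_neq0 chain_u'] below' above' top']] :=
  IHf r.+1 _ _ _ u'_neq0 (has_weight_raise k neq_artop u_nu) u'_Lmax u'_free.
  by rewrite addnS.
have k_def : k%:R = Lt ar - nu ar.
  by rewrite -(below' ar) ?val_ar // raised_weight_at // addrC addKr.
exists (fun b : nat => if b == r then k else ks' b); split.
- exists c => //; rewrite raise_chainS eqxx -chain_u'; apply: raise_chain_ext.
  by move=> b /andP [ltrb _]; rewrite (gtn_eqF ltrb).
- move=> a ltar; rewrite -below' ?raised_weight_other //; last exact: ltnW.
    by apply: contraTneq ltar => ->; rewrite val_ar ltnn.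
  by apply: neq_top; lia.
- move=> a /andP [lera ltaT]; have [eq_ar|neq_ar] := eqVneq (a : nat) r.
    have -> : a = ar by apply: val_inj; rewrite /= val_ar.
    by rewrite -k_def val_ar; split.
  have [|ks'_a ks'_le1] := above' a; first by rewrite ltaT andbT ltn_neqAle eq_sym neq_ar.
  rewrite ks'_a raised_weight_other //; last exact: neq_top.
  by apply: contra neq_ar => /eqP ->; rewrite val_ar.
rewrite big_ltn // eqxx (eq_big_nat _ _ (F2 := ks')) => [|b /andP [ltrb _]].
  by rewrite natrD addrCA -top' raised_weight_top // addrC subrK.
by rewrite (gtn_eqF ltrb).
Qed.

(* When the [E top b] also annihilate [u], the sl(2)-string relation of the
   even pair [(a, top)] forces the top weight just before step [a] to be [Lt a]. *)
Lemma raise_chain_top f : forall r u nu ks, (f + r)%N = T -> u != 0 ->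
  has_weight rho u nu -> L_maximal T rho u -> raise_free r u -> lower_free r u ->
  (forall a : 'I_N, (r <= a < T)%N -> (ks a)%:R = Lt a - nu a) ->
  forall a : 'I_N, (r <= a < T)%N -> (m <= a)%N ->
  nu top = Lt a + (\sum_(r <= b < a) ks b)%:R.
Proof.
elim: f => [|f IHf] r u nu ks eq_T u_neq0 u_nu u_Lmax u_free u_lfree ks_def a
  /andP [lera ltaT] lema; first by exfalso; lia.
have ltrT : (r < T)%N by lia.
set ar : 'I_N := inord r.
have val_ar : (ar : nat) = r by rewrite inordK // ltnS ltnW.
have neq_artop : ar != top by apply: neq_top; rewrite val_ar.
have ltarT : (ar < T)%N by rewrite val_ar.
have u_free_ar : raise_free ar u by move=> b; rewrite val_ar; apply: u_free.
have [k [u'_neq0 u'_Lmax u'_free _]] := raise_step ltarT u_neq0 u_nu u_Lmax u_free_ar.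
rewrite val_ar in u'_free.
have u'_nu := has_weight_raise k neq_artop u_nu.
have [|ks' [_ below' _ _]] :=
  raise_chain_hw (f := f) (r := r.+1) _ u'_neq0 u'_nu u'_Lmax u'_free.
  by rewrite addnS.
have k_def : k%:R = Lt ar - nu ar.
  by rewrite -(below' ar) ?val_ar // raised_weight_at // addrC addKr.
have [eq_ar|neq_ar] := eqVneq (a : nat) r.
  have -> : a = ar by apply: val_inj; rewrite /= val_ar.
  rewrite big_geq ?val_ar // addr0.
  have par_top_ar : par m top = par m ar by rewrite /par /= leq_addr val_ar -eq_ar lema.
  have neq_topar : top != ar by rewrite eq_sym.
  have Eu0 : E top ar *m u = 0 by apply: u_lfree; rewrite val_ar leqnn.
  have := sl2_string rep k par_top_ar neq_topar Eu0 u_nu.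
  rewrite [iter k.+1 _ _]/= (u'_free ar) ?val_ar // mulmx0 => /esym/eqP.
  rewrite scaler_eq0 (negPf u'_neq0) orbF mulf_eq0 pnatr_eq0 /= subr_eq0 subr_eq.
  by move=> /eqP ->; rewrite k_def subrK.
have ltra : (r < a)%N by rewrite ltn_neqAle eq_sym neq_ar lera.
have k_ks : k = ks r.
  apply/eqP; rewrite -(eqr_nat C) k_def -(ks_def ar) ?val_ar ?leqnn //.
have ks_def' b : (r.+1 <= b < T)%N -> (ks b)%:R = Lt b - raised_weight nu ar k b.
  move=> /andP [ltrb ltbT]; rewrite raised_weight_other; last exact: neq_top.
    by apply: ks_def; rewrite ltbT ltnW.
  by apply: contraTneq ltrb => ->; rewrite val_ar ltnn.
have := IHf r.+1 _ _ ks _ u'_neq0 u'_nu u'_Lmax u'_free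
  (lower_free_raise k ltrT u_Lmax u_lfree) ks_def' a _ lema.
move=> /(_ _ (_ : (r < a < T)%N)) IH; rewrite (big_ltn ltra) natrD addrCA -k_ks.
by rewrite -IH ?addnS ?ltra ?raised_weight_top // addrC subrK.
Qed.

Lemma lmax_raise_chain v w : v != 0 -> has_weight rho v w -> L_maximal T rho v ->
  exists ks, [/\ exists2 c, c != 0 & raise_chain ks 0 T v = c *: h0,
    forall a : 'I_N, (a < T)%N ->
      (ks a)%:R = Lt a - w a /\ ((a < m)%N -> (ks a <= 1)%N) &
    w top = Lt top + (\sum_(0 <= b < T) ks b)%:R].
Proof.
move=> v_neq0 v_w v_Lmax.
have [//|ks [chain_v _ ks_def w_top]] := raise_chain_hw (addn0 T) v_neq0 v_w v_Lmax.
by exists ks; split => // a ltaT; apply: ks_def.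
Qed.

Lemma raise_chain_exps_eq ks ks' nu nu' :
  (forall a : 'I_N, (a < T)%N -> (ks a)%:R = Lt a - nu a) ->
  (forall a : 'I_N, (a < T)%N -> (ks' a)%:R = Lt a - nu' a) ->
  (forall a : 'I_N, (a < T)%N -> nu a = nu' a) ->
  forall b : nat, (0 <= b < 0 + T)%N -> ks b = ks' b.
Proof.
move=> ks_def ks'_def eq_nu b /andP [_ ltbT]; apply/eqP; rewrite -(eqr_nat C).
have val_b : (inord b : 'I_N) = b :> nat by rewrite inordK // ltnS ltnW.
have ltbT' : ((inord b : 'I_N) < T)%N by rewrite val_b.
by move: (ks_def _ ltbT') (ks'_def _ ltbT'); rewrite val_b eq_nu // => -> ->.
Qed.

Lemma lmax_weight_upper v w a : v != 0 -> has_weight rho v w ->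
  L_maximal T rho v -> (a < T)%N ->
  w a <= Lt a /\ ((a < m)%N -> Lt a - 1 <= w a).
Proof.
move=> v_neq0 v_w v_Lmax ltaT.
have [ks [_ ks_def _]] := lmax_raise_chain v_neq0 v_w v_Lmax.
have [ks_a ks_le1] := ks_def a ltaT.
split; first by rewrite -subr_ge0 -ks_a ler0n.
by move=> /ks_le1; rewrite lerBlDl -lerBlDr -ks_a lern1.
Qed.

Lemma lmax_weight_lower v w a b : v != 0 -> has_weight rho v w ->
  L_maximal T rho v -> (m <= a)%N -> b = a.+1 :> nat -> Lt b <= w a.
Proof.
move=> v_neq0 v_w v_Lmax lema val_b; have ltaT : (a < T)%N by rewrite -ltnS -val_b.
have [|s [nus [s_neq0 s_nus s_Lmax s_lfree w_nus]]] :=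
  lower_free_exists (leqnn T) v_neq0 v_w v_Lmax.
  by move=> c /andP [leTc ltcT]; exfalso; lia.
have [ks [_ ks_def s_top]] := lmax_raise_chain s_neq0 s_nus s_Lmax.
have top_weight (c : 'I_N) : (c < T)%N -> (m <= c)%N ->
    nus top = Lt c + (\sum_(0 <= i < c) ks i)%:R.
  move=> ltcT lemc.
  apply: (raise_chain_top (addn0 T) s_neq0 s_nus s_Lmax _ s_lfree) => //.
  by move=> a' /andP [_ lta'T]; apply: (ks_def a' lta'T).1.
have top_b : nus top = Lt b + (\sum_(0 <= i < b) ks i)%:R.
  have [ltbT|/top_of_ge eq_btop] := ltnP b T.
    by apply: top_weight; rewrite // val_b ltnW.
  by rewrite s_top eq_btop.
have nus_a : nus a = Lt b.
  have [ks_a _] := ks_def a ltaT.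
  move: top_b; rewrite (top_weight a) // val_b big_nat_recr //= natrD addrA addrAC.
  move=> /addIr Lt_a; apply: (addrI (ks a)%:R).
  by rewrite {1}ks_a subrK Lt_a addrC.
by have [j ->] := w_nus a ltaT; rewrite nus_a lerDl ler0n.
Qed.

Lemma lmax_unique v w v' w' : v != 0 -> has_weight rho v w -> L_maximal T rho v ->
  v' != 0 -> has_weight rho v' w' -> L_maximal T rho v' ->
  (forall a : 'I_N, (a < T)%N -> w a = w' a) -> exists c, v' = c *: v.
Proof.
move=> v_neq0 v_w v_Lmax v'_neq0 v'_w' v'_Lmax eq_w.
have [ks [[c c_neq0 chain_v] ks_def w_top]] := lmax_raise_chain v_neq0 v_w v_Lmax.
have [ks' [[c' _ chain_v'] ks'_def w'_top]] := lmax_raise_chain v'_neq0 v'_w' v'_Lmax.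
have eq_ks := raise_chain_exps_eq (fun a h => (ks_def a h).1)
  (fun a h => (ks'_def a h).1) eq_w.
have w_eq : w =1 w'.
  move=> p; have [ltpT|/top_of_ge ->] := ltnP p T; first exact: eq_w.
  by rewrite w_top w'_top (eq_big_nat _ _ eq_ks).
pose u := c' *: v + (- c) *: v'.
have u_w : has_weight rho u w.
  move=> p; rewrite mulmxDr -!scalemxAr v_w v'_w' -w_eq !scalerA.
  by rewrite [c' * _]mulrC [- c * _]mulrC -!scalerA -scalerDr.
have u_Lmax : L_maximal T rho u.
  by move=> p q ltpq ltqT; rewrite mulmxDr -!scalemxAr v_Lmax ?v'_Lmax // !scaler0 addr0.
have u0 : u = 0.
  apply/eqP; apply: contraT => u_neq0.
  have [ks'' [[c'' c''_neq0 chain_u] ks''_def _]] := lmax_raise_chain u_neq0 u_w u_Lmax.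
  have eq_ks'' := raise_chain_exps_eq (fun a h => (ks_def a h).1)
    (fun a h => (ks''_def a h).1) (fun a _ => erefl).
  move: chain_u; rewrite -(raise_chain_ext _ eq_ks'') raise_chain_linear chain_v.
  rewrite (raise_chain_ext _ eq_ks) chain_v' !scalerA mulNr mulrC -scalerDl subrr scale0r.
  by move/eqP; rewrite eq_sym scaler_eq0 (negPf c''_neq0) (negPf h0_neq0).
move/eqP: u0; rewrite /u scaleNr subr_eq0 => /eqP cv.
by exists (c' / c); rewrite mulrC -scalerA cv scalerA mulVf // scale1r.
Qed.
End ToHighestWeight.
End RaisingChain.

Theorem theorem2 (m n d : nat)
    (rho : 'I_(m + n).+1 -> 'I_(m + n).+1 -> 'M[C]_d) (J : 'M[C]_d)
    (Lt : 'I_(m + n).+1 -> C)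
    (v : 'cV[C]_d) (w : 'I_(m + n).+1 -> C) (Lam : 'I_(m + n) -> C) :
  super_glrep m rho J ->
  irreducible_super rho J ->
  has_highest_weight rho Lt ->
  weight_vector rho v w ->
  L_maximal (m + n) rho v ->
  (forall p : 'I_(m + n), w (widen_ord (leqnSn _) p) = Lam p) ->
  ((forall p : 'I_(m + n), (m <= p)%N ->
      Lam p <= Lt (widen_ord (leqnSn _) p) /\ Lt (lift ord0 p) <= Lam p) /\
   (forall p : 'I_(m + n), (p < m)%N ->
      Lam p <= Lt (widen_ord (leqnSn _) p) /\
      Lt (widen_ord (leqnSn _) p) - 1 <= Lam p)) /\
  (forall (v' : 'cV[C]_d) (w' : 'I_(m + n).+1 -> C),
      weight_vector rho v' w' ->
      L_maximal (m + n) rho v' ->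
      (forall p : 'I_(m + n), w' (widen_ord (leqnSn _) p) = Lam p) ->
      exists c : C, v' = c *: v).
Proof.
move=> rep irr [h [[h_neq0 h_Lt] h_prim]] [v_neq0 v_w] v_Lmax w_Lam.
have [h0 [c0 [h0_neq0 h0_Lt h0_prim Jh0]]] := primitive_homogeneous rep h_neq0 h_Lt h_prim.
have upper := lmax_weight_upper rep irr h0_neq0 h0_Lt h0_prim Jh0 v_neq0 v_w v_Lmax.
have lower := lmax_weight_lower rep irr h0_neq0 h0_Lt h0_prim Jh0 v_neq0 v_w v_Lmax.
split.
  split => p Hp; rewrite -w_Lam;
    have [le_Lt ge_Lt1] := upper (widen_ord (leqnSn _) p) (ltn_ord p).
    by split => //; apply: lower.
  by split => //; apply: ge_Lt1.
move=> v' w' [v'_neq0 v'_w'] v'_Lmax w'_Lam.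
apply: (lmax_unique rep irr h0_neq0 h0_Lt h0_prim Jh0 v_neq0 v_w v_Lmax v'_neq0 v'_w' v'_Lmax).
move=> a ltaT; have -> : a = widen_ord (leqnSn _) (Ordinal ltaT) by apply: val_inj.
by rewrite w_Lam w'_Lam.
Qed.
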